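(* Every quasiorder on a set $A$ is the intersection of a family of half-space quasiorders on $A$.
   Context: A quasiorder on $A$ is a reflexive and transitive relation; $\Delta_A=\{(a,a)\mid a\in A\}$. A quasiorder $\alpha$ on $A$ is a half-space if there is a quasiorder $\beta$ on $A$ with $\alpha\cup\beta=A\times A$ and $\alpha\cap\beta=\Delta_A$. *)

Definition quasiorder {A : Type} (r : A -> A -> Prop) : Prop :=
  (forall a, r a a) /\ (forall a b c, r a b -> r b c -> r a c).

Definition half_space {A : Type} (alpha : A -> A -> Prop) : Prop :=
  quasiorder alpha /\
  exists beta : A -> A -> Prop,
    quasiorder beta /\
    (forall a b, alpha a b \/ beta a b) /\
    (forall a b, (alpha a b /\ beta a b) <-> a = b).

(* For any subset U of A, the relation "x ∈ U implies y ∈ U" is a half-space: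
   its complementary quasiorder is the diagonal together with U × (A \ U).
   A quasiorder rho is the intersection of these half-spaces over the principal
   up-sets U = {x | rho c x}, since rho a b holds iff every principal up-set
   containing a also contains b. *)

From Stdlib Require Import Classical.

Section MembershipHalfSpace.

Context {A : Type} (U : A -> Prop).

Definition membership_order (x y : A) : Prop := U x -> U y.

Definition membership_coorder (x y : A) : Prop := x = y \/ (U x /\ ~ U y).

Lemma membership_order_quasiorder : quasiorder membership_order.
Proof. unfold membership_order; split; auto. Qed.

Lemma membership_coorder_quasiorder : quasiorder membership_coorder.
Proof.
  unfold membership_coorder; split; [now left|].
  intros x y z [<- | [Ux NUy]] [<- | [Uy NUz]]; tauto.
Qed.

Lemma membership_order_half_space : half_space membership_order.
Proof.
  split; [exact membership_order_quasiorder|].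
  exists membership_coorder; split; [exact membership_coorder_quasiorder|].
  unfold membership_order, membership_coorder; split.
  - intros x y; destruct (classic (U x)), (classic (U y)); tauto.
  - intros x y; split.
    + intros [Hxy [-> | [Ux NUy]]]; tauto.
    + intros ->; auto.
Qed.

End MembershipHalfSpace.

Lemma quasiorder_principal_upsets {A : Type} {rho : A -> A -> Prop} :
  quasiorder rho ->
  forall a b, rho a b <-> (forall c, rho c a -> rho c b).
Proof.
  intros [refl trans] a b; split.
  - intros Hab c Hca; exact (trans c a b Hca Hab).
  - intros H; exact (H a (refl a)).
Qed.

Theorem theorem2p9 (A : Type) (rho : A -> A -> Prop) :
  quasiorder rho ->
  exists F : (A -> A -> Prop) -> Prop,
    (forall alpha, F alpha -> half_space alpha) /\
    (forall a b, rho a b <-> (forall alpha, F alpha -> alpha a b)).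
Proof.
  intros Hrho.
  exists (fun alpha => exists c, alpha = membership_order (rho c)); split.
  - intros alpha [c ->]; apply membership_order_half_space.
  - intros a b; rewrite (quasiorder_principal_upsets Hrho a b); split.
    + intros H alpha [c ->]; exact (H c).
    + intros H c; exact (H _ (ex_intro _ c eq_refl)).
Qed.
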